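(* Let $D$ be a tournament missing disjoint paths of length 2 and let $C$ be a double cycle in $\Delta(D)$. Then $K(C)$ is an interval of $D$, i.e. for all $u,v\in K(C)$ we have $N^+(u)\setminus K(C)=N^+(v)\setminus K(C)$ and $N^-(u)\setminus K(C)=N^-(v)\setminus K(C)$.
   Context: All digraphs are finite oriented graphs; $N^+(v)$, $N^-(v)$ are out- and in-neighborhoods in $D$, and $N^{++}(v)$ is the set of vertices $w\notin N^+(v)\cup\{v\}$ with $u\to w$ for some $u\in N^+(v)$. A missing edge is a pair of distinct non-adjacent vertices; the missing graph is formed by the missing edges. $D$ is a tournament missing disjoint paths of length 2 if its missing graph is a vertex-disjoint union of paths each with exactly two edges. For missing edges $\{x,y\},\{a,b\}$, $\{x,y\}$ loses to $\{a,b\}$ (written $xy\to ab$) if the endpoints can be labelled so that $x\to a$, $b\notin N^+(x)\cup N^{++}(x)$, $y\to b$, $a\notin N^+(y)\cup N^{++}(y)$. $\Delta(D)$ has the missing edges as vertices and arcs $(e,e')$ whenever $e$ loses to $e'$. For missing paths $abc$, $xyz$ (edges $ab,bc$ and $xy,yz$), $abc\to xyz$ means each of $ab,bc$ loses to each of $xy,yz$. A double cycle is a sequence $C=a_1b_1c_1,\dots,a_kb_kc_k$ ($k\ge2$) of distinct missing paths of length 2 (components of the missing graph) with $a_ib_ic_i\to a_{i+1}b_{i+1}c_{i+1}$ for all $i$, indices modulo $k$. $K(C)=\{a_i,b_i,c_i: 1\le i\le k\}$. *)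

From mathcomp Require Import all_boot.
Set Implicit Arguments. Unset Strict Implicit. Unset Printing Implicit Defensive.

Section Defs.
Variable V : finType.
Variable arc : rel V.

Definition oriented := (forall v, ~~ arc v v) /\ (forall u v, arc u v -> ~~ arc v u).

Definition outN (v : V) : {set V} := [set w | arc v w].
Definition inN (v : V) : {set V} := [set w | arc w v].
Definition outN2 (v : V) : {set V} :=
  [set w | (w \notin outN v) && (w != v) && [exists u, arc v u && arc u w]].

Definition missing (x y : V) : bool := (x != y) && ~~ arc x y && ~~ arc y x.

Definition mnb (v : V) : {set V} := [set w | missing v w].

(* the missing graph is a vertex-disjoint union of paths with exactly two edges:
   every vertex incident to a missing edge lies in a component a-b-c which is
   exactly a path of length 2 *)
Definition tmdp2 : Prop :=
  oriented /\
  forall v, mnb v != set0 ->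
    exists a b c, v \in [set a; b; c] /\ a != c /\
      mnb a = [set b] /\ mnb b = [set a; c] /\ mnb c = [set b].

Definition mpath (a b c : V) : bool := missing a b && missing b c && (a != c).

(* ordered version of "xy loses to ab" with the given labelling *)
Definition loses_lab (x y a b : V) : bool :=
  [&& arc x a, b \notin outN x :|: outN2 x, arc y b & a \notin outN y :|: outN2 y].

Definition loses (x y a b : V) : bool :=
  [|| loses_lab x y a b, loses_lab y x a b, loses_lab x y b a | loses_lab y x b a].

Definition delta_arc (x y a b : V) : bool := [&& missing x y, missing a b & loses x y a b].

Definition path_arc (p q : V * V * V) : bool :=
  let: (a, b, c) := p in let: (x, y, z) := q in
  [&& delta_arc a b x y, delta_arc a b y z, delta_arc b c x y & delta_arc b c y z].

Definition pverts (p : V * V * V) : {set V} := let: (a, b, c) := p in [set a; b; c].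

Definition double_cycle (k : nat) (C : 'I_k -> V * V * V) : Prop :=
  2 <= k /\
  (forall i, let: (a, b, c) := C i in mpath a b c) /\
  (forall i j, i != j -> pverts (C i) != pverts (C j)) /\
  (forall i, path_arc (C i) (C (ordS i))).

Definition KC (k : nat) (C : 'I_k -> V * V * V) : {set V} := \bigcup_(i < k) pverts (C i).

End Defs.

From mathcomp Require Import all_boot zify.
Set Implicit Arguments. Unset Strict Implicit. Unset Printing Implicit Defensive.

(* Fix w outside K(C).  Missing edges never leave a missing path, so w is
   adjacent to all of K(C).  If xy loses to ab (labelled x -> a, y -> b) and
   x -> w, then b -> w, for otherwise x -> w -> b puts b in N^+(x) u N^++(x).
   Hence the number of arcs from an edge into w cannot decrease along an arc
   of Delta(D); around the double cycle it is constant and the same for ab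
   and bc.  Count 0 or 2 puts all of K(C) on one side of w.  Count 1 is
   impossible: choosing s_i -> w in the i-th path, the same argument gives
   s_(i+1) -> s_i with no 2-path from s_i to s_(i+1), and such a cyclic
   sequence of pairwise adjacent vertices cannot exist. *)

Section CyclicIndex.
Variable k : nat.

Lemma val_iter_ordS m (i : 'I_k) : val (iter m (@ordS k) i) = (i + m) %% k.
Proof.
elim: m => [|m IH] /=; first by rewrite addn0 modn_small.
by rewrite IH addnS -addn1 modnDml addn1.
Qed.

Lemma iter_ordS_k (i : 'I_k) : iter k (@ordS k) i = i.
Proof. by apply: val_inj; rewrite val_iter_ordS modnDr modn_small. Qed.

Lemma iter_ordS_neq m (i : 'I_k) : 0 < m < k -> iter m (@ordS k) i != i.
Proof.
move=> /andP [m0 mk]; apply/eqP => /(congr1 val); rewrite val_iter_ordS /=.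
have := ltn_ord i; case: (ltnP (i + m) k) => [im _|im ik].
  by rewrite modn_small //; lia.
have -> : i + m = (i + m - k) + k by lia.
by rewrite modnDr modn_small; lia.
Qed.

Lemma ordS_neq (i : 'I_k) : 1 < k -> ordS i != i.
Proof. exact: (iter_ordS_neq (m := 1)). Qed.

Lemma iter_ordS_onto (i j : 'I_k) : exists m, iter m (@ordS k) i = j.
Proof.
exists (j + (k - i)); apply: val_inj; rewrite val_iter_ordS.
have -> : i + (j + (k - i)) = j + k by have := ltn_ord i; lia.
by rewrite modnDr modn_small.
Qed.

Lemma ordS_nondecreasing_const (f : 'I_k -> nat) :
  (forall i, f i <= f (ordS i)) -> forall i j, f i = f j.
Proof.
move=> f_ordS.
have f_iter m i : f i <= f (iter m (@ordS k) i).
  by elim: m => //= m IH; apply: leq_trans IH (f_ordS _).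
move=> i j; apply/eqP; rewrite eqn_leq.
have [m Ej] := iter_ordS_onto i j; have [m' Ei] := iter_ordS_onto j i.
by apply/andP; split; [rewrite -Ej | rewrite -Ei]; apply: f_iter.
Qed.

End CyclicIndex.

(* Induction on m shows s_(i+m) -> s_i for 0 < m < k: if instead
   s_i -> s_(i+m+1), then s_i -> s_(i+m+1) -> s_(i+1) is a forbidden 2-path.
   For m = k - 1 this contradicts s_i -> s_(i-1). *)
Lemma back_cycle_not_2path_free (T : Type) (r : rel T) k (s : 'I_k -> T) :
  1 < k -> (forall x y, r x y -> ~~ r y x) ->
  (forall i j, i != j -> r (s i) (s j) || r (s j) (s i)) ->
  (forall i, r (s (ordS i)) (s i)) ->
  ~ (forall i u, ~~ (r (s i) u && r u (s (ordS i)))).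
Proof.
move=> k2 asym adj back no2.
have iter_back m : 0 < m < k -> forall i, r (s (iter m (@ordS k) i)) (s i).
  elim: m => [//|m IH] /andP [_ mk] i.
  have [->|m0] := posnP m; first exact: back.
  have mk1 : 0 < m < k by rewrite m0 ltnW.
  have /orP [//|fwd] := adj _ _ (iter_ordS_neq i (m:=m.+1) mk).
  have := IH mk1 (ordS i); rewrite -iterSr => bwd.
  by move: (no2 i (s (iter m.+1 (@ordS k) i))); rewrite fwd bwd.
have k1 : 0 < k.-1 < k by lia.
pose i0 := Ordinal (ltnW k2).
have := iter_back _ k1 (ordS i0); rewrite -iterSr prednK ?(ltnW k2) // iter_ordS_k.
by move/asym; rewrite back.
Qed.

Section LosingEdges.
Variables (V : finType) (arc : rel V).

Definition adjacent (x y : V) : bool := arc x y || arc y x.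

Definition arcs_into (w x y : V) : nat := arc x w + arc y w.

Lemma missingC x y : missing arc x y = missing arc y x.
Proof. by rewrite /missing eq_sym andbAC. Qed.

Lemma loses_lab_sym x y a b : loses_lab arc x y a b -> loses_lab arc y x b a.
Proof. by case/and4P => *; apply/and4P. Qed.

Lemma loses_lab_unreachable x y a b : missing arc x y -> loses_lab arc x y a b ->
  ~~ arc x b /\ forall u, ~~ (arc x u && arc u b).
Proof.
case/andP => _ nyx /and4P [_ nb yb _].
have bx : b != x by apply: contraNneq nyx => <-.
move: nb; rewrite !inE negb_or bx => /andP [nxb /= n2]; split=> // u.
by apply: contra n2 => xub; rewrite nxb; apply/existsP; exists u.
Qed.

Lemma loses_lab_arc_into w x y a b : missing arc x y -> adjacent b w ->
  loses_lab arc x y a b -> arc x w -> arc b w.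
Proof.
move=> Mxy /orP [//|wb] /(loses_lab_unreachable Mxy) [_ n2] xw.
by move: (n2 w); rewrite xw wb.
Qed.

Lemma loses_lab_dominated x y a b : missing arc x y -> adjacent x b ->
  loses_lab arc x y a b -> arc b x /\ forall u, ~~ (arc x u && arc u b).
Proof.
move=> Mxy Axb /(loses_lab_unreachable Mxy) [nxb n2]; split=> //.
by move: Axb; rewrite /adjacent (negbTE nxb).
Qed.

Lemma loses_arcs_into_le w x y a b : missing arc x y -> adjacent a w -> adjacent b w ->
  loses arc x y a b -> arcs_into w x y <= arcs_into w a b.
Proof.
have lab x' y' a' b' : missing arc x' y' -> adjacent a' w -> adjacent b' w ->
    loses_lab arc x' y' a' b' -> arcs_into w x' y' <= arcs_into w a' b'.
  move=> M Aa Ab L; have xb := loses_lab_arc_into M Ab L.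
  have ya : arc y' w -> arc a' w.
    by apply: loses_lab_arc_into (loses_lab_sym L); rewrite // missingC.
  have leq_of_imp (p q : bool) : (p -> q) -> p <= q by case: p => // /(_ isT) ->.
  by rewrite /arcs_into [arc a' w + _]addnC leq_add // leq_of_imp.
have arcs_intoC u v : arcs_into w u v = arcs_into w v u by rewrite /arcs_into addnC.
move=> M Aa Ab /or4P [] L; first exact: lab.
- by rewrite (arcs_intoC x); apply: lab; rewrite // missingC.
- by rewrite (arcs_intoC a); apply: lab.
- by rewrite (arcs_intoC x) (arcs_intoC a); apply: lab; rewrite // missingC.
Qed.

Lemma loses_dominated w x y a b s s' : missing arc x y ->
  adjacent x a -> adjacent x b -> adjacent y a -> adjacent y b ->
  adjacent a w -> adjacent b w -> loses arc x y a b -> ~~ (arc a w && arc b w) ->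
  s \in [set x; y] -> s' \in [set a; b] -> arc s w -> arc s' w ->
  arc s' s /\ forall u, ~~ (arc s u && arc u s').
Proof.
have lab x' y' a' b' : missing arc x' y' -> adjacent x' b' -> adjacent y' a' ->
    adjacent a' w -> adjacent b' w -> loses_lab arc x' y' a' b' -> ~~ (arc a' w && arc b' w) ->
    s \in [set x'; y'] -> s' \in [set a'; b'] -> arc s w -> arc s' w ->
    arc s' s /\ forall u, ~~ (arc s u && arc u s').
  move=> M Axb Aya Aa Ab L nab; rewrite !inE => /orP [] /eqP-> /orP [] /eqP-> sw s'w.
  - by move: nab; rewrite s'w (loses_lab_arc_into M Ab L sw).
  - exact: loses_lab_dominated L.
  - by apply: loses_lab_dominated (loses_lab_sym L); rewrite // missingC.
  - rewrite missingC in M; move: nab.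
    by rewrite s'w (loses_lab_arc_into M Aa (loses_lab_sym L) sw).
move=> M Axa Axb Aya Ayb Aa Ab /or4P [] L nab; first exact: lab.
- by rewrite [[set x; y]]setUC; apply: lab; rewrite // missingC.
- by rewrite [[set a; b]]setUC; apply: lab; rewrite // andbC.
- rewrite [[set x; y]]setUC [[set a; b]]setUC.
  by apply: lab; rewrite // 1?missingC // andbC.
Qed.

End LosingEdges.

Section MissingPaths.
Variables (V : finType) (arc : rel V).
Hypothesis Ht : tmdp2 arc.

Lemma mpath_mnb a b c : mpath arc a b c ->
  [/\ mnb arc a = [set b], mnb arc b = [set a; c] & mnb arc c = [set b]].
Proof.
case/andP => /andP [Mab Mbc] nac.
have aB : a \in mnb arc b by rewrite inE missingC.
have cB : c \in mnb arc b by rewrite inE.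
have [|a' [b' [c' [+ [_ [Ma [Mb Mc]]]]]]] := Ht.2 b; first by apply/set0Pn; exists a.
rewrite !inE => /orP [/orP [] | ] /eqP Eb; rewrite Eb ?Ma ?Mb ?Mc !inE in aB cB.
- by move: nac; rewrite (eqP aB) (eqP cB) eqxx.
- move: nac; case/orP: aB => /eqP->; case/orP: cB => /eqP->; rewrite ?eqxx // => _;
    by rewrite Eb Ma Mb Mc // setUC.
- by move: nac; rewrite (eqP aB) (eqP cB) eqxx.
Qed.

Definition mball2 (y : V) : {set V} :=
  y |: mnb arc y :|: \bigcup_(t in mnb arc y) mnb arc t.

Lemma mpath_vertsE a b c y : mpath arc a b c -> y \in [set a; b; c] ->
  [set a; b; c] = mball2 y.
Proof.
case/mpath_mnb => Ma Mb Mc; rewrite /mball2 !inE => /orP [/orP [] | ] /eqP->;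
  rewrite ?Ma ?Mb ?Mc ?bigcup_setU !big_set1 ?Ma ?Mb ?Mc;
  by apply/setP => z; rewrite !inE; case: (z == a) (z == b) (z == c) => [] [] [].
Qed.

End MissingPaths.

Section DoubleCycle.
Variables (V : finType) (arc : rel V) (k : nat) (C : 'I_k -> V * V * V).
Hypothesis Ht : tmdp2 arc.
Hypothesis Hdc : double_cycle arc C.

Definition ca i := (C i).1.1.
Definition cb i := (C i).1.2.
Definition cc i := (C i).2.
Definition cverts i : {set V} := [set ca i; cb i; cc i].

Lemma C_E i : C i = (ca i, cb i, cc i).
Proof. by rewrite /ca /cb /cc; case: (C i) => [[]]. Qed.

Lemma cverts_mem i : [/\ ca i \in cverts i, cb i \in cverts i & cc i \in cverts i].
Proof. by rewrite !inE !eqxx ?orbT. Qed.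

Lemma cycle_mpath i : mpath arc (ca i) (cb i) (cc i).
Proof. by have := Hdc.2.1 i; rewrite C_E. Qed.

Lemma cycle_path_arc i :
  path_arc arc (ca i, cb i, cc i) (ca (ordS i), cb (ordS i), cc (ordS i)).
Proof. by rewrite -!C_E; apply: Hdc.2.2.2. Qed.

Lemma mem_KC z : reflect (exists i, z \in cverts i) (z \in KC C).
Proof.
by apply: (iffP bigcupP) => [[i _]|[i]]; rewrite ?C_E => zi; exists i; rewrite ?C_E.
Qed.

Lemma cverts_inj i j z : z \in cverts i -> z \in cverts j -> i = j.
Proof.
move=> zi zj; apply/eqP; apply: contraT => /(Hdc.2.2.1 i j); rewrite !C_E /=.
by rewrite (mpath_vertsE Ht (cycle_mpath i) zi) (mpath_vertsE Ht (cycle_mpath j) zj) eqxx.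
Qed.

Lemma cverts_nonadjacent i x y : x \in cverts i -> ~~ adjacent arc x y -> y \in cverts i.
Proof.
move=> xi nadj; have [<- //|nxy] := eqVneq x y.
have M : missing arc x y by rewrite /missing nxy /= -negb_or.
by rewrite /cverts (mpath_vertsE Ht (cycle_mpath i) xi) !inE M orbT.
Qed.

Lemma adjacent_cverts i j x y : i != j -> x \in cverts i -> y \in cverts j ->
  adjacent arc x y.
Proof.
move=> nij xi yj; apply: contraT => /(cverts_nonadjacent xi) yi.
by rewrite (cverts_inj yi yj) eqxx in nij.
Qed.

Section Outside.
Variable w : V.
Hypothesis wK : w \notin KC C.

Lemma adjacent_outside x : x \in KC C -> adjacent arc x w.
Proof.
case/mem_KC => i xi; apply: contraT => /(cverts_nonadjacent xi) wi.
by move: wK; have -> // : w \in KC C by apply/mem_KC; exists i.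
Qed.

Lemma arc_outside_flip x : x \in KC C -> arc w x = ~~ arc x w.
Proof.
move/adjacent_outside => /orP [xw|wx].
- by rewrite xw; apply/negbTE; apply: Ht.1.2 _ _ xw.
- by rewrite wx (negbTE (Ht.1.2 _ _ wx)).
Qed.

Lemma cverts_adjacent_w i z : z \in cverts i -> adjacent arc z w.
Proof. by move=> zi; apply: adjacent_outside; apply/mem_KC; exists i. Qed.

Let nab i := arcs_into arc w (ca i) (cb i).
Let nbc i := arcs_into arc w (cb i) (cc i).

Lemma arcs_into_step i : [/\ nab i <= nab (ordS i), nab i <= nbc (ordS i),
  nbc i <= nab (ordS i) & nbc i <= nbc (ordS i)].
Proof.
have [a b c] := cverts_mem (ordS i).
case/and4P: (cycle_path_arc i) =>
  /and3P [M1 _ L1] /and3P [_ _ L2] /and3P [M3 _ L3] /and3P [_ _ L4].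
by split; apply: loses_arcs_into_le => //; apply: cverts_adjacent_w; eassumption.
Qed.

Lemma nab_const i j : nab i = nab j.
Proof. by apply: ordS_nondecreasing_const => {}i; case: (arcs_into_step i). Qed.

Lemma nbc_nab i : nbc i = nab i.
Proof.
have [_ _ le1 _] := arcs_into_step i.
have [_ le2 _ _] := arcs_into_step (ord_pred i); rewrite ord_predK in le2.
apply/eqP; rewrite eqn_leq -(nab_const (ordS i)) le1.
by rewrite -(nab_const (ord_pred i) (ordS i)).
Qed.

Lemma cycle_dominated i s s' : nab (ordS i) = 1 ->
  s \in cverts i -> s' \in cverts (ordS i) -> arc s w -> arc s' w ->
  arc s' s /\ forall u, ~~ (arc s u && arc u s').
Proof.
move=> one si s'i sw s'w.
have one' : nbc (ordS i) = 1 by rewrite nbc_nab.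
have ni : i != ordS i by rewrite eq_sym ordS_neq ?Hdc.1.
have dom x y a b : delta_arc arc x y a b -> x \in cverts i -> y \in cverts i ->
    a \in cverts (ordS i) -> b \in cverts (ordS i) -> arcs_into arc w a b = 1 ->
    s \in [set x; y] -> s' \in [set a; b] -> arc s' s /\ forall u, ~~ (arc s u && arc u s').
  move=> /and3P [M _ L] xi yi ai bi ab1 hs hs'.
  apply: (loses_dominated M (adjacent_cverts ni xi ai) (adjacent_cverts ni xi bi)
    (adjacent_cverts ni yi ai) (adjacent_cverts ni yi bi)
    (cverts_adjacent_w ai) (cverts_adjacent_w bi) L _ hs hs' sw s'w).
  by move: ab1; rewrite /arcs_into; case: (arc a w) (arc b w) => [] [].
have edge j z : z \in cverts j -> (z \in [set ca j; cb j]) || (z \in [set cb j; cc j]).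
  by rewrite !inE => /orP [->|->]; rewrite ?orbT.
have [ai bi ci] := cverts_mem i; have [ai' bi' ci'] := cverts_mem (ordS i).
case/and4P: (cycle_path_arc i) => D1 D2 D3 D4.
case/orP: (edge _ _ si) => hs; case/orP: (edge _ _ s'i) => hs'.
- exact: dom D1 ai bi ai' bi' one hs hs'.
- exact: dom D2 ai bi bi' ci' one' hs hs'.
- exact: dom D3 bi ci ai' bi' one hs hs'.
- exact: dom D4 bi ci bi' ci' one' hs hs'.
Qed.

Lemma nab_neq1 i : nab i != 1.
Proof.
apply/eqP => one; have one_all j : nab j = 1 by rewrite (nab_const j i).
have into_w j : exists z, z \in cverts j /\ arc z w.
  have [aj bj _] := cverts_mem j.
  move: (one_all j); rewrite /nab /arcs_into.
  case aw: (arc (ca j) w); first by exists (ca j).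
  by case bw: (arc (cb j) w) => //; exists (cb j).
have [s Hs] := fin_all_exists into_w.
apply: (back_cycle_not_2path_free (r := arc) (s := s) Hdc.1 Ht.1.2).
- by move=> j l jl; apply: adjacent_cverts jl (Hs j).1 (Hs l).1.
- by move=> j; case: (cycle_dominated (one_all _) (Hs j).1 (Hs _).1 (Hs j).2 (Hs _).2).
- by move=> j; case: (cycle_dominated (one_all _) (Hs j).1 (Hs _).1 (Hs j).2 (Hs _).2).
Qed.

Lemma arc_into_outside_eq u v : u \in KC C -> v \in KC C -> arc u w = arc v w.
Proof.
have arc_w i z : z \in cverts i -> arc z w = (nab i == 2).
  move: (nab_neq1 i) (nbc_nab i); rewrite /nbc /nab /arcs_into.
  by rewrite !inE => + + /orP [/orP [] | ] /eqP->;
    case: (arc (ca i) w) (arc (cb i) w) (arc (cc i) w) => [] [] [].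
move=> /mem_KC [i ui] /mem_KC [j vj].
by rewrite (arc_w _ _ ui) (arc_w _ _ vj) (nab_const i j).
Qed.

End Outside.
End DoubleCycle.

Theorem proposition4p15 (V : finType) (arc : rel V) (k : nat) (C : 'I_k -> V * V * V) :
  tmdp2 arc -> double_cycle arc C ->
  forall u v, u \in KC C -> v \in KC C ->
    outN arc u :\: KC C = outN arc v :\: KC C /\
    inN arc u :\: KC C = inN arc v :\: KC C.
Proof.
move=> Ht Hdc u v uK vK; split; apply/setP => w; rewrite !inE;
  case: (boolP (w \in KC C)) => //= wK.
- by rewrite (arc_into_outside_eq Ht Hdc wK uK vK).
- by rewrite !(arc_outside_flip Ht Hdc wK) // (arc_into_outside_eq Ht Hdc wK uK vK).
Qed.
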